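(* Let $j=\sqrt{-1}$, $\zeta_8=e^{2\pi j/8}$, and let $\sigma$ be the automorphism of $\mathbb{Q}(\zeta_8)$ fixing $\mathbb{Q}(j)$ with $\sigma(\zeta_8)=-\zeta_8$. For $a\in\mathbb{Z}[\zeta_8]$ and $b\in\mathbb{Z}[j]$ define the $3\times 2$ matrix $$X=\begin{pmatrix} X_S\\ X_T\end{pmatrix}=\begin{pmatrix} a & b\\ \sigma(a) & -b^*\\ b & \sigma(a)^*\end{pmatrix},$$ where $X_S=(a\ \ b)$ is the first row and $X_T=\begin{pmatrix} \sigma(a) & -b^*\\ b & \sigma(a)^*\end{pmatrix}$ consists of the last two rows. Then for every $(a,b)\neq(0,0)$: (i) $\det(X^\dagger X)\geq 1$ (so the code $\{X\}$ has the non-vanishing determinant property), and (ii) $\det(X_S X_S^\dagger)\,\det(X_T X_T^\dagger)\neq 0$ (full diversity in the parallel channel).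
   Context: $c^*$ denotes the complex conjugate of $c\in\mathbb{C}$ (elements of $\mathbb{Q}(\zeta_8)$ are viewed as complex numbers), and $M^\dagger$ denotes the conjugate transpose of a complex matrix $M$. $\mathbb{Z}[\zeta_8]$ is the ring of integers of $\mathbb{Q}(\zeta_8)$ and $\mathbb{Z}[j]$ the ring of Gaussian integers. $\mathbb{Q}(\zeta_8)/\mathbb{Q}(j)$ is a cyclic extension of degree 2 with Galois group generated by $\sigma$, and $a\sigma(a)$ is the relative norm of $a$, which lies in $\mathbb{Z}[j]$ for $a\in\mathbb{Z}[\zeta_8]$. *)

From mathcomp Require Import all_boot all_order all_algebra all_field.
Set Implicit Arguments. Unset Strict Implicit. Unset Printing Implicit Defensive.
Import Order.TTheory GRing.Theory Num.Theory.
Local Open Scope ring_scope.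

(* zeta8 = e^{2 pi j / 8} = (1 + j)/sqrt 2 *)
Definition zeta8 : algC := (1 + 'i) / sqrtC 2.

(* An element of Z[zeta8] given by its integer coordinates on the
   (integral) power basis 1, zeta8, zeta8^2, zeta8^3. *)
Definition Zz8 (c : 'I_4 -> int) : algC :=
  \sum_(k < 4) (c k)%:~R * zeta8 ^+ k.

(* sigma : Q(zeta8) -> Q(zeta8), fixing Q(j), zeta8 |-> - zeta8,
   applied to the element with coordinates c. *)
Definition sigma8 (c : 'I_4 -> int) : algC :=
  \sum_(k < 4) (c k)%:~R * (- zeta8) ^+ k.

Definition Zi (b0 b1 : int) : algC := b0%:~R + b1%:~R * 'i.

Definition adj_mx (m n : nat) (M : 'M[algC]_(m, n)) : 'M[algC]_(n, m) :=
  (map_mx (fun z => z^*) M)^T.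

Definition XS (a b : algC) : 'M[algC]_(1, 2) :=
  \matrix_(i < 1, j < 2) (if (j == 0 :> nat) then a else b).

Definition XT (sa b : algC) : 'M[algC]_(2, 2) :=
  \matrix_(i < 2, j < 2)
    (if (i == 0 :> nat) then (if (j == 0 :> nat) then sa else - b^*)
     else (if (j == 0 :> nat) then b else sa^*)).

Definition Xmat (a sa b : algC) : 'M[algC]_(3, 2) := col_mx (XS a b) (XT sa b).

(* Both Gram determinants are explicit in |a|^2, |sigma(a)|^2 and |b|^2:
   det (X^+ X) is |a sigma(a)|^2 + |b|^4 plus nonnegative terms, and the
   parallel-channel product vanishes only if a sigma(a) = b = 0.  Writing
   a = u + zeta8 v with u, v in Z[j] gives sigma(a) = u - zeta8 v, so the
   relative norm a sigma(a) = u^2 - j v^2 lies in Z[j]; hence |a sigma(a)|^2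
   and |b|^4 are nonnegative integers.  Finally u^2 = j v^2 forces u = v = 0
   since j is not a square in Q(j), so |a sigma(a)|^2 + |b|^4 >= 1 whenever
   (a, b) <> (0, 0). *)

From mathcomp Require Import all_boot all_order all_algebra all_field.
From mathcomp Require Import zify ring.
Import Order.TTheory GRing.Theory Num.Theory.
Local Open Scope ring_scope.

Lemma det_mx2 (R : comNzRingType) (M : 'M[R]_2) :
  \det M = M 0 0 * M 1 1 - M 0 1 * M 1 0.
Proof.
rewrite (expand_det_row _ 0) !big_ord_recl big_ord0 /cofactor !det_mx11 !mxE /=.
rewrite addr0 expr0 mul1r expr1 mulN1r mulrN.
by congr (M _ _ * M _ _ - M _ _ * M _ _); apply/val_inj.
Qed.

Lemma adj_col_mx (m1 m2 n : nat) (A : 'M[algC]_(m1, n)) (B : 'M[algC]_(m2, n)) :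
  adj_mx (col_mx A B) = row_mx (adj_mx A) (adj_mx B).
Proof. by rewrite /adj_mx map_col_mx tr_col_mx. Qed.

Lemma det_XS_gram (a b : algC) :
  \det (XS a b *m adj_mx (XS a b)) = `|a| ^+ 2 + `|b| ^+ 2.
Proof. by rewrite det_mx11 !mxE !big_ord_recl big_ord0 !mxE /= addr0 !normCK. Qed.

Lemma det_XT_gram (sa b : algC) :
  \det (XT sa b *m adj_mx (XT sa b)) = (`|sa| ^+ 2 + `|b| ^+ 2) ^+ 2.
Proof.
rewrite det_mx2 !mxE !big_ord_recl !big_ord0 !mxE /= !normCK !raddfN /= !conjCK.
ring.
Qed.

Lemma det_Xmat_gram (a sa b : algC) :
  \det (adj_mx (Xmat a sa b) *m Xmat a sa b) =
  (`|a| ^+ 2 + `|sa| ^+ 2 + `|b| ^+ 2) * (`|sa| ^+ 2 + 2 * `|b| ^+ 2)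
    - `|a| ^+ 2 * `|b| ^+ 2.
Proof.
have -> : adj_mx (Xmat a sa b) *m Xmat a sa b =
    adj_mx (XS a b) *m XS a b + adj_mx (XT sa b) *m XT sa b.
  by rewrite -mul_row_col -adj_col_mx.
rewrite det_mx2 !mxE !big_ord_recl !big_ord0 !mxE /=.
rewrite !normCK !raddfN /= !conjCK.
ring.
Qed.

Lemma det_Xmat_gram_ge (a sa b : algC) :
  `|a * sa| ^+ 2 + `|b| ^+ 4 <= \det (adj_mx (Xmat a sa b) *m Xmat a sa b).
Proof.
rewrite det_Xmat_gram normrM exprMn -subr_ge0.
set A := `|a|; set S := `|sa|; set B := `|b|.
have -> : (A ^+ 2 + S ^+ 2 + B ^+ 2) * (S ^+ 2 + 2 * B ^+ 2) - A ^+ 2 * B ^+ 2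
    - (A ^+ 2 * S ^+ 2 + B ^+ 4)
    = (A * B) ^+ 2 + S ^+ 4 + 3 * (S * B) ^+ 2 + B ^+ 4 by ring.
by do !apply: addr_ge0; rewrite ?mulr_ge0 ?exprn_ge0 ?normr_ge0.
Qed.

Lemma XS_XT_det_neq0 (a sa b : algC) : (a * sa != 0) || (b != 0) ->
  \det (XS a b *m adj_mx (XS a b)) * \det (XT sa b *m adj_mx (XT sa b)) != 0.
Proof.
move=> nz; rewrite det_XS_gram det_XT_gram mulf_eq0 sqrf_eq0.
rewrite !paddr_eq0 ?exprn_ge0 // !sqrf_eq0 !normr_eq0.
by move: nz; rewrite mulf_eq0; case: (a == 0); case: (sa == 0); case: (b == 0).
Qed.

Lemma Zi_norm (p q : int) : `|Zi p q| ^+ 2 = (p ^+ 2 + q ^+ 2)%:~R.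
Proof. by rewrite /Zi (mulrC _ 'i) normC2_rect ?rpred_int // intrD !rmorphXn. Qed.

Lemma Zi_eq0 (p q : int) : (Zi p q == 0) = (p == 0) && (q == 0).
Proof.
by rewrite -normr_eq0 -sqrf_eq0 Zi_norm intr_eq0 paddr_eq0 ?sqr_ge0 // !sqrf_eq0.
Qed.

Lemma Zi_norm_ge1 (p q : int) : Zi p q != 0 -> 1 <= `|Zi p q| ^+ 2.
Proof. by rewrite Zi_eq0 Zi_norm ler1z => nz; nia. Qed.

Lemma zeta8_sqr : zeta8 ^+ 2 = 'i.
Proof.
rewrite /zeta8 expr_div_n sqrtCK sqrrD expr1n sqrCi mul1r addrAC subrr add0r.
by rewrite -mulr_natr mulfK ?pnatr_eq0.
Qed.

Lemma sum_ord4_even_odd (R : comNzRingType) (c : 'I_4 -> R) (x : R) :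
  \sum_(k < 4) c k * x ^+ k = (c 0 + c 2 * x ^+ 2) + x * (c 1 + c 3 * x ^+ 2).
Proof.
rewrite !big_ord_recl big_ord0 /=.
have -> : lift ord0 ord0 = 1 :> 'I_4 by apply/val_inj.
have -> : lift ord0 (lift ord0 ord0) = 2 :> 'I_4 by apply/val_inj.
have -> : lift ord0 (lift ord0 (lift ord0 ord0)) = 3 :> 'I_4 by apply/val_inj.
rewrite (_ : ord0 = 0) //; ring.
Qed.

Lemma Zz8_split (c : 'I_4 -> int) : Zz8 c = Zi (c 0) (c 2) + zeta8 * Zi (c 1) (c 3).
Proof. by rewrite /Zz8 sum_ord4_even_odd zeta8_sqr. Qed.

Lemma sigma8_split (c : 'I_4 -> int) :
  sigma8 c = Zi (c 0) (c 2) - zeta8 * Zi (c 1) (c 3).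
Proof. by rewrite /sigma8 sum_ord4_even_odd sqrrN zeta8_sqr mulNr. Qed.

Lemma Zz8_mul_sigma8 (c : 'I_4 -> int) :
  Zz8 c * sigma8 c = Zi (c 0 ^+ 2 - c 2 ^+ 2 + 2 * c 1 * c 3)
                        (2 * c 0 * c 2 - c 1 ^+ 2 + c 3 ^+ 2).
Proof.
have i2 : 'i ^+ 2 = -1 :> algC := sqrCi _.
have z2 := zeta8_sqr.
rewrite Zz8_split sigma8_split /Zi !(intrD, intrB, intrM, rmorphXn) /=.
ring: i2 z2.
Qed.

(* The hypotheses say (p + q j)^2 = j (r + s j)^2; modulo 4 they force
   p, q, r, s to be even, so a nonzero solution could be halved forever. *)
Lemma gauss_sqr_eq_i_sqr (p q r s : int) :
  p ^+ 2 - q ^+ 2 + 2 * r * s = 0 -> 2 * p * q - r ^+ 2 + s ^+ 2 = 0 ->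
  [/\ p = 0, q = 0, r = 0 & s = 0].
Proof.
have parity (x : int) : exists k : int, x = 2 * k \/ x = 2 * k + 1.
  by exists (x %/ 2)%Z; lia.
pose sumsq (x y z w : int) := x ^+ 2 + y ^+ 2 + z ^+ 2 + w ^+ 2.
have sumsq_ge0 p' q' r' s' : 0 <= sumsq p' q' r' s'.
  by rewrite !addr_ge0 ?sqr_ge0.
have [n] : exists n : nat, sumsq p q r s <= n%:Z by exists (absz (sumsq p q r s)); lia.
elim: n p q r s => [|n IH] p q r s; rewrite /sumsq.
  by move=> *; split; nia.
have [p' [->|->]] := parity p; have [q' [->|->]] := parity q;
have [r' [->|->]] := parity r; have [s' [->|->]] := parity s;
  move=> small E1 E2; try (exfalso; lia).
have sumsq2 : sumsq (2 * p') (2 * q') (2 * r') (2 * s') = 4 * sumsq p' q' r' s'.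
  by rewrite /sumsq; ring.
move: small; rewrite -/(sumsq _ _ _ _) sumsq2 => small.
case: (IH p' q' r' s'); [|lia|lia|by move=> -> -> -> ->].
by move: (sumsq_ge0 p' q' r' s') small; move: (sumsq _ _ _ _) => m; lia.
Qed.

Lemma Zz8_norm_ge1 (c : 'I_4 -> int) : Zz8 c != 0 -> 1 <= `|Zz8 c * sigma8 c| ^+ 2.
Proof.
move=> nz; rewrite Zz8_mul_sigma8 Zi_norm_ge1 // Zi_eq0.
apply: contra nz => /andP[/eqP E1 /eqP E2]; rewrite Zz8_split.
have [-> -> -> ->] := gauss_sqr_eq_i_sqr _ _ _ _ E1 E2.
have /eqP -> : Zi 0 0 == 0 by rewrite Zi_eq0 eqxx.
by rewrite mulr0 addr0.
Qed.

Lemma code_norm_ge1 (c : 'I_4 -> int) (b0 b1 : int) :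
  (Zz8 c, Zi b0 b1) != (0, 0) ->
  1 <= `|Zz8 c * sigma8 c| ^+ 2 + `|Zi b0 b1| ^+ 4.
Proof.
have [-> | nz_b] := eqVneq (Zi b0 b1) 0.
  rewrite xpair_eqE eqxx andbT normr0 expr0n addr0; exact: Zz8_norm_ge1.
move=> _; rewrite ler_wpDl ?exprn_ge0 // (exprM _ 2 2).
exact/exprn_ege1/Zi_norm_ge1.
Qed.

Theorem mainTheorem2 (ca : 'I_4 -> int) (b0 b1 : int) :
  let a := Zz8 ca in
  let sa := sigma8 ca in
  let b := Zi b0 b1 in
  (a, b) != (0, 0) ->
  1 <= \det (adj_mx (Xmat a sa b) *m Xmat a sa b) /\
  \det (XS a b *m adj_mx (XS a b)) * \det (XT sa b *m adj_mx (XT sa b)) != 0.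
Proof.
move=> a sa b; subst a sa b => nz.
have key := code_norm_ge1 ca b0 b1 nz.
split; first exact: le_trans key (det_Xmat_gram_ge _ _ _).
apply: XS_XT_det_neq0; apply: contraTT key; rewrite negb_or !negbK.
by case/andP=> /eqP-> /eqP->; rewrite normr0 !expr0n addr0 ler10.
Qed.
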